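(* Let $F_3:\mathbf{Sets}\times\mathbf{Sets}\to\mathbf{Sets}\times\mathbf{Sets}$ be the functor $F_3(V,E)=(1,(V\uplus E)\times(V\uplus E))$, and let $\mathcal{M}$ be the class of morphisms $\langle f_V,f_E\rangle$ of $F_3$-coalgebras with $f_V$ and $f_E$ both injective. Then $(\mathbf{Coalg}_{F_3},\mathcal{M})$ is an $\mathcal{M}$-adhesive category.
   Context: $1$ is a one-element set, $\uplus$ disjoint union. An $F_3$-coalgebra is an object $(V,E)$ of $\mathbf{Sets}\times\mathbf{Sets}$ with a morphism $(V,E)\to F_3(V,E)$, i.e. essentially a function $c:E\to(V\uplus E)\times(V\uplus E)$ (graphs with nested directed edges); morphisms are pairs $(f_V,f_E)$ commuting with the structure maps. A pair $(\mathbf{C},\mathcal{M})$ with $\mathcal{M}$ a class of monomorphisms is $\mathcal{M}$-adhesive if $\mathcal{M}$ contains identities and is closed under composition, pushouts and pullbacks along $\mathcal{M}$-morphisms exist and $\mathcal{M}$ is stable under them, and pushouts along $\mathcal{M}$-morphisms are vertical weak van Kampen squares (for any commutative cube with such a pushout as bottom, pullbacks as back faces and all vertical morphisms in $\mathcal{M}$, the top face is a pushout iff the front faces are pullbacks). *)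

Set Implicit Arguments.
Unset Strict Implicit.

Record Category := {
  Ob :> Type;
  Hom : Ob -> Ob -> Type;
  heq : forall A B, Hom A B -> Hom A B -> Prop;
  idm : forall A, Hom A A;
  comp : forall A B C, Hom B C -> Hom A B -> Hom A C;
  heq_refl : forall A B (f : Hom A B), heq f f;
  heq_sym : forall A B (f g : Hom A B), heq f g -> heq g f;
  heq_trans : forall A B (f g h : Hom A B), heq f g -> heq g h -> heq f h;
  comp_heq : forall A B C (f f' : Hom B C) (g g' : Hom A B),
      heq f f' -> heq g g' -> heq (comp f g) (comp f' g');
  comp_assoc : forall A B C D (f : Hom C D) (g : Hom B C) (h : Hom A B),
      heq (comp f (comp g h)) (comp (comp f g) h);
  comp_idl : forall A B (f : Hom A B), heq (comp (idm B) f) f;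
  comp_idr : forall A B (f : Hom A B), heq (comp f (idm A)) f
}.

Arguments Hom {c} _ _.
Arguments heq {c A B} _ _.
Arguments idm {c} _.
Arguments comp {c A B C} _ _.

Section CatDefs.
Variable C : Category.

Definition is_mono (A B : C) (m : Hom A B) : Prop :=
  forall (X : C) (g h : Hom X A), heq (comp m g) (comp m h) -> heq g h.

Definition is_pushout (A B C' D : C) (m : Hom A B) (f : Hom A C')
    (n : Hom B D) (g : Hom C' D) : Prop :=
  heq (comp n m) (comp g f) /\
  forall (X : C) (h : Hom B X) (k : Hom C' X),
    heq (comp h m) (comp k f) ->
    exists u : Hom D X,
      heq (comp u n) h /\ heq (comp u g) k /\
      forall u' : Hom D X, heq (comp u' n) h -> heq (comp u' g) k -> heq u' u.

Definition is_pullback (P B C' D : C) (p1 : Hom P B) (p2 : Hom P C')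
    (f : Hom B D) (g : Hom C' D) : Prop :=
  heq (comp f p1) (comp g p2) /\
  forall (X : C) (h : Hom X B) (k : Hom X C'),
    heq (comp f h) (comp g k) ->
    exists u : Hom X P,
      heq (comp p1 u) h /\ heq (comp p2 u) k /\
      forall u' : Hom X P, heq (comp p1 u') h -> heq (comp p2 u') k -> heq u' u.

Definition MorClass := forall A B : C, Hom A B -> Prop.

(** Pushouts along M-morphisms are vertical weak van Kampen squares:
    bottom face the pushout (A,B,C',D) with m in M; top face
    (A',B',C',D') commutative; vertical morphisms a,b,c,d in M;
    back faces pullbacks, front faces commutative. *)
Definition vertical_weak_VK (M : MorClass) : Prop :=
  forall (A B C' D : C) (m : Hom A B) (f : Hom A C') (n : Hom B D) (g : Hom C' D),
    M _ _ m -> is_pushout m f n g ->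
  forall (A' B' C'' D' : C) (m' : Hom A' B') (f' : Hom A' C'')
         (n' : Hom B' D') (g' : Hom C'' D')
         (a : Hom A' A) (b : Hom B' B) (c : Hom C'' C') (d : Hom D' D),
    heq (comp n' m') (comp g' f') ->
    M _ _ a -> M _ _ b -> M _ _ c -> M _ _ d ->
    is_pullback a m' m b ->
    is_pullback a f' f c ->
    heq (comp n b) (comp d n') ->
    heq (comp g c) (comp d g') ->
    (is_pushout m' f' n' g' <->
       (is_pullback b n' n d /\ is_pullback c g' g d)).

Definition M_adhesive (M : MorClass) : Prop :=
  (forall (A B : C) (m : Hom A B), M _ _ m -> is_mono m) /\
  (forall A : C, M _ _ (idm A)) /\
  (forall (A B D : C) (f : Hom A B) (g : Hom B D), M _ _ f -> M _ _ g -> M _ _ (comp g f)) /\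
  (forall (A B C' : C) (m : Hom A B) (f : Hom A C'), M _ _ m ->
     exists (D : C) (n : Hom B D) (g : Hom C' D), is_pushout m f n g) /\
  (forall (A B C' D : C) (m : Hom A B) (f : Hom A C') (n : Hom B D) (g : Hom C' D),
     M _ _ m -> is_pushout m f n g -> M _ _ g) /\
  (forall (B C' D : C) (f : Hom B D) (g : Hom C' D), M _ _ g ->
     exists (P : C) (p1 : Hom P B) (p2 : Hom P C'), is_pullback p1 p2 f g) /\
  (forall (P B C' D : C) (p1 : Hom P B) (p2 : Hom P C') (f : Hom B D) (g : Hom C' D),
     M _ _ g -> is_pullback p1 p2 f g -> M _ _ p1) /\
  vertical_weak_VK M.

End CatDefs.

(** * F3-coalgebras:  F3(V,E) = (1, (V ⊎ E) × (V ⊎ E)).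
    A coalgebra (V,E) -> F3(V,E) is a pair (V -> 1, E -> (V⊎E)×(V⊎E));
    the first component is the unique map to 1, so we record only c. *)
Record F3coalg := mkF3 {
  cV : Type;
  cE : Type;
  cstr : cE -> (cV + cE) * (cV + cE)
}.
Arguments cstr : clear implicits.

Definition smap (A A' B B' : Type) (f : A -> A') (g : B -> B') (x : A + B) : A' + B' :=
  match x with inl a => inl (f a) | inr b => inr (g b) end.

Definition F3map (A A' B B' : Type) (f : A -> A') (g : B -> B')
    (p : (A + B) * (A + B)) : (A' + B') * (A' + B') :=
  (smap f g (fst p), smap f g (snd p)).

Record F3hom (X Y : F3coalg) := {
  hV : cV X -> cV Y;
  hE : cE X -> cE Y;
  hcomm : forall e, cstr Y (hE e) = F3map hV hE (cstr X e)
}.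

Definition F3heq (X Y : F3coalg) (f g : F3hom X Y) : Prop :=
  (forall v, hV f v = hV g v) /\ (forall e, hE f e = hE g e).

Definition F3id (X : F3coalg) : F3hom X X.
Proof.
  refine {| hV := fun v => v; hE := fun e => e; hcomm := _ |}.
  intro e; unfold F3map; destruct (cstr X e) as [s t];
  destruct s, t; reflexivity.
Defined.

Definition F3comp (X Y Z : F3coalg) (f : F3hom Y Z) (g : F3hom X Y) : F3hom X Z.
Proof.
  refine {| hV := fun v => hV f (hV g v); hE := fun e => hE f (hE g e); hcomm := _ |}.
  intro e. rewrite (hcomm f), (hcomm g). unfold F3map.
  destruct (cstr X e) as [s t]; destruct s, t; reflexivity.
Defined.

Definition F3Coalg : Category.
Proof.
  refine {| Ob := F3coalg; Hom := F3hom; heq := F3heq;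
            idm := F3id; comp := F3comp |};
  unfold F3heq; simpl; firstorder; try congruence.
Defined.

Definition M_inj : MorClass F3Coalg :=
  fun X Y (f : F3hom X Y) =>
    (forall x y, hV f x = hV f y -> x = y) /\
    (forall x y, hE f x = hE f y -> x = y).

From Stdlib Require Import ClassicalEpsilon FinFun.

(* The forgetful functor to Sets x Sets creates pullbacks, and pushouts along
   morphisms with injective components: the pullback of coalgebras is the
   componentwise fibred product, whose edges get as ends the pairs of ends of
   the two matched edges, and the pushout of m along f is C plus the part of B
   outside the image of m, whose edges keep their ends after gluing along f.
   Every categorical pullback or pushout is isomorphic to these, so all the
   axioms reduce to Sets, where a pushout along an injection is a disjoint
   union and the van Kampen property can be checked element by element. *)

Set Implicit Arguments.
Unset Strict Implicit.

Record set_pullback {P B C D : Type} (p1 : P -> B) (p2 : P -> C)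
    (f : B -> D) (g : C -> D) : Prop := {
  spb_comm : forall x, f (p1 x) = g (p2 x);
  spb_lift : forall b c, f b = g c -> exists x, p1 x = b /\ p2 x = c;
  spb_jointly_inj : forall x y, p1 x = p1 y -> p2 x = p2 y -> x = y }.

(* For injective [m] these conditions say that [D] is [C] plus a copy of
   [B] minus the image of [m], i.e. the square is a pushout in Sets. *)
Record set_pushout {A B C D : Type} (m : A -> B) (f : A -> C)
    (n : B -> D) (g : C -> D) : Prop := {
  spo_comm : forall a, n (m a) = g (f a);
  spo_inj_g : Injective g;
  spo_cover : forall d, (exists c, g c = d) \/ (exists b, n b = d);
  spo_meet : forall b c, n b = g c -> exists a, m a = b;
  spo_inj_off_m : forall b b', n b = n b' -> (forall a, m a <> b) -> b = b' }.

Section SetPullback.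
Variables (P B C D : Type) (p1 : P -> B) (p2 : P -> C) (f : B -> D) (g : C -> D).
Hypothesis pb : set_pullback p1 p2 f g.

Lemma set_pullback_inj : Injective g -> Injective p1.
Proof.
  intros inj_g x y E. apply (spb_jointly_inj pb E), inj_g.
  rewrite <- !(spb_comm pb), E. reflexivity.
Qed.

Lemma set_pullback_factor (X : Type) (h : X -> B) (k : X -> C) :
  (forall x, f (h x) = g (k x)) ->
  exists u : X -> P, (forall x, p1 (u x) = h x) /\ (forall x, p2 (u x) = k x).
Proof.
  intro hk. destruct (choice _ (fun x => spb_lift pb (hk x))) as [u Hu].
  exists u. split; intro x; apply Hu.
Qed.

Lemma set_pullback_retract (Q : Type) (q1 : Q -> B) (q2 : Q -> C)
    (u : P -> Q) (v : Q -> P) :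
  (forall x, q1 (u x) = p1 x) -> (forall x, q2 (u x) = p2 x) ->
  (forall y, p1 (v y) = q1 y) -> (forall y, p2 (v y) = q2 y) ->
  (forall y, u (v y) = y) -> set_pullback q1 q2 f g.
Proof.
  intros U1 U2 V1 V2 UV. split.
  - intro y. rewrite <- V1, <- V2. apply (spb_comm pb).
  - intros b c E. destruct (spb_lift pb E) as (x & <- & <-). exists (u x); auto.
  - intros y y' E1 E2. rewrite <- (UV y), <- (UV y'). f_equal.
    apply (spb_jointly_inj pb); rewrite ?V1, ?V2; assumption.
Qed.

End SetPullback.

Section SetPushout.
Variables (A B C D : Type) (m : A -> B) (f : A -> C) (n : B -> D) (g : C -> D).
Hypothesis po : set_pushout m f n g.

Lemma set_pushout_factor (X : Type) (h : B -> X) (k : C -> X) :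
  (forall a, h (m a) = k (f a)) ->
  exists u : D -> X, (forall b, u (n b) = h b) /\ (forall c, u (g c) = k c).
Proof.
  intro hk.
  assert (graph : forall d, exists x,
             (forall b, n b = d -> x = h b) /\ (forall c, g c = d -> x = k c)).
  { intro d. destruct (classic (exists c, g c = d)) as [[c <-] | not_g].
    - exists (k c). split.
      + intros b E. destruct (spo_meet po E) as [a <-].
        rewrite (spo_comm po) in E. apply (spo_inj_g po) in E.
        rewrite <- E, hk. reflexivity.
      + intros c' E. apply (spo_inj_g po) in E. subst. reflexivity.
    - destruct (spo_cover po d) as [? | [b <-]]; [contradiction |].
      exists (h b). split.
      + intros b' E. f_equal. apply (spo_inj_off_m po (eq_sym E)).
        intros a <-. apply not_g. exists (f a). apply eq_sym, (spo_comm po).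
      + intros c E. exfalso. eauto. }
  destruct (choice _ graph) as [u Hu].
  exists u. split; [intro b; apply (proj1 (Hu _)) | intro c; apply (proj2 (Hu _))];
    reflexivity.
Qed.

Lemma set_pushout_retract (Y : Type) (n0 : B -> Y) (g0 : C -> Y)
    (u : Y -> D) (v : D -> Y) :
  (forall b, u (n0 b) = n b) -> (forall c, u (g0 c) = g c) ->
  (forall b, v (n b) = n0 b) -> (forall c, v (g c) = g0 c) ->
  (forall e, v (u e) = e) -> set_pushout m f n0 g0.
Proof.
  intros Un Ug Vn Vg VU. split.
  - intro a. rewrite <- Vn, <- Vg. f_equal. apply (spo_comm po).
  - intros c c' E. apply (spo_inj_g po). rewrite <- !Ug, E. reflexivity.
  - intro e. destruct (spo_cover po (u e)) as [[c Hc] | [b Hb]].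
    + left. exists c. rewrite <- Vg, Hc. apply VU.
    + right. exists b. rewrite <- Vn, Hb. apply VU.
  - intros b c E. apply (spo_meet po (c := c)). rewrite <- Un, <- Ug, E. reflexivity.
  - intros b b' E. apply (spo_inj_off_m po). rewrite <- !Un, E. reflexivity.
Qed.

End SetPushout.

Section SetVanKampen.
Variables (A B C D A' B' C' D' : Type)
  (m : A -> B) (f : A -> C) (n : B -> D) (g : C -> D)
  (m' : A' -> B') (f' : A' -> C') (n' : B' -> D') (g' : C' -> D')
  (a : A' -> A) (b : B' -> B) (c : C' -> C) (d : D' -> D).
Hypotheses (po : set_pushout m f n g) (inj_b : Injective b) (inj_c : Injective c)
  (top_comm : forall x, n' (m' x) = g' (f' x))
  (back_m : set_pullback a m' m b) (back_f : set_pullback a f' f c)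
  (front_n : forall y, n (b y) = d (n' y)) (front_g : forall z, g (c z) = d (g' z)).

Lemma vk_meet_lift_f' (y : B) (z : C') :
  n y = g (c z) -> exists x, b (m' x) = y /\ f' x = z.
Proof.
  intro E. destruct (spo_meet po E) as [a0 <-].
  rewrite (spo_comm po) in E. apply (spo_inj_g po) in E.
  destruct (spb_lift back_f E) as (x & <- & <-).
  exists x. split; [apply eq_sym, (spb_comm back_m) | reflexivity].
Qed.

Lemma vk_meet_lift_m' (y : B') (w : C) :
  n (b y) = g w -> exists x, m' x = y /\ c (f' x) = w.
Proof.
  intro E. destruct (spo_meet po E) as [a0 Ea0].
  destruct (spb_lift back_m Ea0) as (x & <- & <-).
  exists x. split; [reflexivity |].
  rewrite <- (spb_comm back_f). apply (spo_inj_g po).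
  rewrite <- (spo_comm po), Ea0. exact E.
Qed.

Section TopCover.
Hypothesis top_cover : forall e, (exists z, g' z = e) \/ (exists y, n' y = e).

Lemma vk_front_n_pullback : set_pullback b n' n d.
Proof.
  split; [exact front_n | | intros y y' E _; exact (inj_b E)].
  intros y e E. destruct (top_cover e) as [[z <-] | [y' <-]].
  - rewrite <- front_g in E. destruct (vk_meet_lift_f' E) as (x & Hy & <-).
    exists (m' x). auto.
  - destruct (classic (exists a0, m a0 = y)) as [[a0 <-] | off_m].
    + assert (E1 : n (b y') = g (f a0)) by (rewrite front_n, <- E; apply (spo_comm po)).
      destruct (vk_meet_lift_m' E1) as (x' & <- & Ex').
      assert (E2 : n (m a0) = g (c (f' x'))) by (rewrite Ex'; apply (spo_comm po)).
      destruct (vk_meet_lift_f' E2) as (x & Hx & Efx).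
      exists (m' x). rewrite top_comm, Efx, <- top_comm. auto.
    + exists y'. split; [| reflexivity].
      symmetry. apply (spo_inj_off_m po); [rewrite front_n; exact E |].
      intros a0 E0. apply off_m. eauto.
Qed.

Lemma vk_front_g_pullback : set_pullback c g' g d.
Proof.
  split; [exact front_g | | intros z z' E _; exact (inj_c E)].
  intros w e E. destruct (top_cover e) as [[z <-] | [y <-]].
  - exists z. split; [| reflexivity].
    apply (spo_inj_g po). rewrite front_g. exact (eq_sym E).
  - rewrite <- front_n in E. destruct (vk_meet_lift_m' (eq_sym E)) as (x & <- & <-).
    exists (f' x). auto.
Qed.

End TopCover.

Lemma vk_top_pushout :
  set_pullback b n' n d -> set_pullback c g' g d -> set_pushout m' f' n' g'.
Proof.
  intros front_n_pb front_g_pb. split.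
  - exact top_comm.
  - intros z z' E. apply inj_c, (spo_inj_g po). rewrite !front_g, E. reflexivity.
  - intro e. destruct (spo_cover po (d e)) as [[w Ew] | [y Ey]].
    + destruct (spb_lift front_g_pb Ew) as (z & _ & <-). left. eauto.
    + destruct (spb_lift front_n_pb Ey) as (y' & _ & <-). right. eauto.
  - intros y z E.
    assert (E' : n (b y) = g (c z)) by (rewrite front_n, front_g, E; reflexivity).
    destruct (vk_meet_lift_f' E') as (x & Ex & _). exists x. exact (inj_b Ex).
  - intros y y' E off_m'. apply inj_b, (spo_inj_off_m po).
    + rewrite !front_n, E. reflexivity.
    + intros a0 E0. destruct (spb_lift back_m E0) as (x & _ & Ex). exact (off_m' x Ex).
Qed.

Theorem set_vertical_weak_VK :
  set_pushout m' f' n' g' <-> set_pullback b n' n d /\ set_pullback c g' g d.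
Proof.
  split.
  - intro top. split; [apply vk_front_n_pullback | apply vk_front_g_pullback];
      exact (spo_cover top).
  - intros [? ?]. apply vk_top_pushout; assumption.
Qed.

End SetVanKampen.

Section Comparison.
Variable K : Category.

Lemma pullback_comparison (P Q B C D : K) (p1 : Hom P B) (p2 : Hom P C)
    (q1 : Hom Q B) (q2 : Hom Q C) (f : Hom B D) (g : Hom C D) :
  is_pullback p1 p2 f g -> is_pullback q1 q2 f g ->
  exists (u : Hom P Q) (v : Hom Q P),
    heq (comp q1 u) p1 /\ heq (comp q2 u) p2 /\
    heq (comp p1 v) q1 /\ heq (comp p2 v) q2 /\ heq (comp u v) (idm Q).
Proof.
  intros [Pc Pu] [Qc Qu].
  destruct (Qu _ p1 p2 Pc) as (u & U1 & U2 & _).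
  destruct (Pu _ q1 q2 Qc) as (v & V1 & V2 & _).
  destruct (Qu _ q1 q2 Qc) as (w & _ & _ & Uniq).
  exists u, v. do 4 (split; [assumption |]).
  apply heq_trans with w; [apply Uniq | apply heq_sym, Uniq; apply comp_idr].
  - exact (heq_trans (comp_assoc q1 u v) (heq_trans (comp_heq U1 (heq_refl v)) V1)).
  - exact (heq_trans (comp_assoc q2 u v) (heq_trans (comp_heq U2 (heq_refl v)) V2)).
Qed.

Lemma pushout_comparison (A B C D E : K) (m : Hom A B) (f : Hom A C)
    (n : Hom B D) (g : Hom C D) (n0 : Hom B E) (g0 : Hom C E) :
  is_pushout m f n g -> is_pushout m f n0 g0 ->
  exists (u : Hom E D) (v : Hom D E),
    heq (comp u n0) n /\ heq (comp u g0) g /\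
    heq (comp v n) n0 /\ heq (comp v g) g0 /\ heq (comp v u) (idm E).
Proof.
  intros [Dc Du] [Ec Eu].
  destruct (Eu _ n g Dc) as (u & U1 & U2 & _).
  destruct (Du _ n0 g0 Ec) as (v & V1 & V2 & _).
  destruct (Eu _ n0 g0 Ec) as (w & _ & _ & Uniq).
  exists u, v. do 4 (split; [assumption |]).
  apply heq_trans with w; [apply Uniq | apply heq_sym, Uniq; apply comp_idl].
  - exact (heq_trans (heq_sym (comp_assoc v u n0))
                     (heq_trans (comp_heq (heq_refl v) U1) V1)).
  - exact (heq_trans (heq_sym (comp_assoc v u g0))
                     (heq_trans (comp_heq (heq_refl v) U2) V2)).
Qed.

End Comparison.

Lemma F3map_comp (A A' A'' B B' B'' : Type) (f1 : A -> A') (f2 : B -> B')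
    (g1 : A' -> A'') (g2 : B' -> B'') (h1 : A -> A'') (h2 : B -> B'') p :
  (forall x, g1 (f1 x) = h1 x) -> (forall x, g2 (f2 x) = h2 x) ->
  F3map g1 g2 (F3map f1 f2 p) = F3map h1 h2 p.
Proof.
  intros E1 E2. destruct p as [[x | x] [y | y]]; unfold F3map, smap; cbn;
    rewrite ?E1, ?E2; reflexivity.
Qed.

Lemma F3map_jointly_inj (PV PE BV BE CV CE : Type) (p1V : PV -> BV) (p1E : PE -> BE)
    (p2V : PV -> CV) (p2E : PE -> CE) :
  (forall x y, p1V x = p1V y -> p2V x = p2V y -> x = y) ->
  (forall x y, p1E x = p1E y -> p2E x = p2E y -> x = y) ->
  forall q q', F3map p1V p1E q = F3map p1V p1E q' ->
               F3map p2V p2E q = F3map p2V p2E q' -> q = q'.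
Proof.
  intros JV JE [[x | x] [y | y]] [[x' | x'] [y' | y']] E1 E2;
    unfold F3map, smap in *; cbn in *; try discriminate;
    injection E1; injection E2; intros; f_equal; f_equal; auto.
Qed.

Definition componentwise_pullback {P B C D : F3coalg} (p1 : F3hom P B) (p2 : F3hom P C)
    (f : F3hom B D) (g : F3hom C D) : Prop :=
  set_pullback (hV p1) (hV p2) (hV f) (hV g) /\ set_pullback (hE p1) (hE p2) (hE f) (hE g).

Definition componentwise_pushout {A B C D : F3coalg} (m : F3hom A B) (f : F3hom A C)
    (n : F3hom B D) (g : F3hom C D) : Prop :=
  set_pushout (hV m) (hV f) (hV n) (hV g) /\ set_pushout (hE m) (hE f) (hE n) (hE g).

Lemma componentwise_pullback_is_pullback (P B C D : F3coalg) (p1 : F3hom P B)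
    (p2 : F3hom P C) (f : F3hom B D) (g : F3hom C D) :
  componentwise_pullback p1 p2 f g -> @is_pullback F3Coalg P B C D p1 p2 f g.
Proof.
  intros [pbV pbE].
  split; [split; cbn; [exact (spb_comm pbV) | exact (spb_comm pbE)] |].
  intros X h k [hkV hkE]; cbn in hkV, hkE.
  destruct (set_pullback_factor pbV hkV) as (uV & U1V & U2V).
  destruct (set_pullback_factor pbE hkE) as (uE & U1E & U2E).
  assert (u_comm : forall e, cstr P (uE e) = F3map uV uE (cstr X e)).
  { intro e. apply (F3map_jointly_inj (spb_jointly_inj pbV) (spb_jointly_inj pbE)).
    - rewrite <- hcomm, U1E, hcomm. symmetry. apply F3map_comp; assumption.
    - rewrite <- hcomm, U2E, hcomm. symmetry. apply F3map_comp; assumption. }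
  exists {| hV := uV; hE := uE; hcomm := u_comm |}.
  split; [split; assumption |]. split; [split; assumption |].
  intros u' [A1 A2] [B1 B2]; cbn in *.
  split; intro x; [apply (spb_jointly_inj pbV) | apply (spb_jointly_inj pbE)];
    cbn; congruence.
Qed.

Lemma componentwise_pushout_is_pushout (A B C D : F3coalg) (m : F3hom A B)
    (f : F3hom A C) (n : F3hom B D) (g : F3hom C D) :
  componentwise_pushout m f n g -> @is_pushout F3Coalg A B C D m f n g.
Proof.
  intros [poV poE].
  split; [split; cbn; [exact (spo_comm poV) | exact (spo_comm poE)] |].
  intros X h k [hkV hkE]; cbn in hkV, hkE.
  destruct (set_pushout_factor poV hkV) as (uV & UnV & UgV).
  destruct (set_pushout_factor poE hkE) as (uE & UnE & UgE).
  assert (u_comm : forall e, cstr X (uE e) = F3map uV uE (cstr D e)).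
  { intro e. destruct (spo_cover poE e) as [[c <-] | [b <-]].
    - rewrite UgE, !hcomm. symmetry. apply F3map_comp; assumption.
    - rewrite UnE, !hcomm. symmetry. apply F3map_comp; assumption. }
  exists {| hV := uV; hE := uE; hcomm := u_comm |}.
  split; [split; assumption |]. split; [split; assumption |].
  intros u' [A1 A2] [B1 B2]; cbn in *.
  split; intro x.
  - destruct (spo_cover poV x) as [[c <-] | [b <-]]; cbn; congruence.
  - destruct (spo_cover poE x) as [[c <-] | [b <-]]; cbn; congruence.
Qed.

Section CoalgPullback.
Variables (B C D : F3coalg) (f : F3hom B D) (g : F3hom C D).

Definition pb_vertex := {p : cV B * cV C | hV f (fst p) = hV g (snd p)}.
Definition pb_edge := {p : cE B * cE C | hE f (fst p) = hE g (snd p)}.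

Definition pb_end (s : cV B + cE B) (t : cV C + cE C)
    (E : smap (hV f) (hE f) s = smap (hV g) (hE g) t) : pb_vertex + pb_edge.
Proof.
  destruct s as [x | x], t as [y | y]; cbn in E; try discriminate.
  - left. exists (x, y). injection E; auto.
  - right. exists (x, y). injection E; auto.
Defined.

Lemma pb_end_fst s t (E : smap (hV f) (hE f) s = smap (hV g) (hE g) t) :
  smap (fun p : pb_vertex => fst (proj1_sig p)) (fun p : pb_edge => fst (proj1_sig p))
    (pb_end E) = s.
Proof. revert E; destruct s, t; cbn; intro E; try discriminate; reflexivity. Qed.

Lemma pb_end_snd s t (E : smap (hV f) (hE f) s = smap (hV g) (hE g) t) :
  smap (fun p : pb_vertex => snd (proj1_sig p)) (fun p : pb_edge => snd (proj1_sig p))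
    (pb_end E) = t.
Proof. revert E; destruct s, t; cbn; intro E; try discriminate; reflexivity. Qed.

Lemma F3map_cstr_agree b c :
  hE f b = hE g c -> F3map (hV f) (hE f) (cstr B b) = F3map (hV g) (hE g) (cstr C c).
Proof. intro E. rewrite <- !hcomm, E. reflexivity. Qed.

Definition pb_cstr (e : pb_edge) : (pb_vertex + pb_edge) * (pb_vertex + pb_edge) :=
  let (p, E) := e in
  (pb_end (f_equal fst (F3map_cstr_agree E)),
   pb_end (f_equal snd (F3map_cstr_agree E))).

Definition pb_obj : F3coalg := mkF3 pb_cstr.

Definition pb_fst : F3hom pb_obj B.
Proof.
  refine {| hV := fun p : cV pb_obj => fst (proj1_sig (p : pb_vertex));
            hE := fun p : cE pb_obj => fst (proj1_sig (p : pb_edge)) |}.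
  intros [[b c] E]. unfold F3map. cbn. rewrite !pb_end_fst.
  destruct (cstr B b); reflexivity.
Defined.

Definition pb_snd : F3hom pb_obj C.
Proof.
  refine {| hV := fun p : cV pb_obj => snd (proj1_sig (p : pb_vertex));
            hE := fun p : cE pb_obj => snd (proj1_sig (p : pb_edge)) |}.
  intros [[b c] E]. unfold F3map. cbn. rewrite !pb_end_snd.
  destruct (cstr C c); reflexivity.
Defined.

Lemma set_pullback_subset_prod (X Y Z : Type) (h : X -> Z) (k : Y -> Z) :
  set_pullback (fun p : {p : X * Y | h (fst p) = k (snd p)} => fst (proj1_sig p))
               (fun p => snd (proj1_sig p)) h k.
Proof.
  split.
  - intros [p E]. exact E.
  - intros x y E. exists (exist _ (x, y) E). auto.
  - intros [[x y] E] [[x' y'] E'] Ex Ey; cbn in *. subst.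
    f_equal. apply proof_irrelevance.
Qed.

Lemma pb_obj_componentwise : componentwise_pullback pb_fst pb_snd f g.
Proof. split; apply set_pullback_subset_prod. Qed.

End CoalgPullback.

Lemma is_pullback_componentwise (P B C D : F3coalg) (p1 : F3hom P B) (p2 : F3hom P C)
    (f : F3hom B D) (g : F3hom C D) :
  @is_pullback F3Coalg P B C D p1 p2 f g -> componentwise_pullback p1 p2 f g.
Proof.
  intro pb.
  pose proof (pb_obj_componentwise f g) as [canV canE].
  destruct (pullback_comparison
              (componentwise_pullback_is_pullback (conj canV canE)) pb)
    as (u & v & [U1V U1E] & [U2V U2E] & [V1V V1E] & [V2V V2E] & [UVV UVE]).
  cbn in *.
  split; [exact (set_pullback_retract canV U1V U2V V1V V2V UVV)
         | exact (set_pullback_retract canE U1E U2E V1E V2E UVE)].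
Qed.

Section Glue.
Variables (A B C : Type) (m : A -> B) (f : A -> C).

Definition off_image := {b : B | forall a, m a <> b}.

Definition glue (b : B) : C + off_image :=
  match excluded_middle_informative (exists a, m a = b) with
  | left H => inl (f (proj1_sig (constructive_indefinite_description _ H)))
  | right H => inr (exist _ b (fun a E => H (ex_intro _ a E)))
  end.

Lemma glue_image : Injective m -> forall a, glue (m a) = inl (f a).
Proof.
  intros inj_m a. unfold glue. destruct excluded_middle_informative as [H | H].
  - destruct constructive_indefinite_description as [a' E]. cbn.
    rewrite (inj_m _ _ E). reflexivity.
  - exfalso. eauto.
Qed.

Lemma glue_off_image b (off : forall a, m a <> b) : glue b = inr (exist _ b off).
Proof.
  unfold glue. destruct excluded_middle_informative as [[a E] | H].
  - destruct (off a E).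
  - do 2 f_equal. apply proof_irrelevance.
Qed.

Lemma glue_not_image b : ~ (exists a, m a = b) -> exists off, glue b = inr (exist _ b off).
Proof. intro H. exists (fun a Ea => H (ex_intro _ a Ea)). apply glue_off_image. Qed.

Lemma glue_set_pushout : Injective m -> set_pushout m f glue inl.
Proof.
  intro inj_m. split.
  - exact (glue_image inj_m).
  - intros c c' E. injection E. trivial.
  - intros [c | [b off]]; [left | right]; eauto using glue_off_image.
  - intros b c E. apply NNPP. intro H.
    destruct (glue_not_image H) as [off Eoff]. rewrite Eoff in E. discriminate.
  - intros b b' E off. rewrite (glue_off_image off) in E.
    destruct (classic (exists a, m a = b')) as [[a <-] | H].
    + rewrite (glue_image inj_m) in E. discriminate.
    + destruct (glue_not_image H) as [off' Eoff']. rewrite Eoff' in E.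
      injection E. trivial.
Qed.

End Glue.

Section CoalgPushout.
Variables (A B C : F3coalg) (m : F3hom A B) (f : F3hom A C).
Hypotheses (inj_mV : Injective (hV m)) (inj_mE : Injective (hE m)).

Definition po_cstr (e : cE C + off_image (hE m)) :
    ((cV C + off_image (hV m)) + (cE C + off_image (hE m))) *
    ((cV C + off_image (hV m)) + (cE C + off_image (hE m))) :=
  match e with
  | inl c => F3map inl inl (cstr C c)
  | inr b => F3map (glue (hV m) (hV f)) (glue (hE m) (hE f)) (cstr B (proj1_sig b))
  end.

Definition po_obj : F3coalg := mkF3 po_cstr.

Definition po_inr : F3hom B po_obj.
Proof.
  refine {| hV := glue (hV m) (hV f) : cV B -> cV po_obj;
            hE := glue (hE m) (hE f) : cE B -> cE po_obj |}.
  intro e. destruct (classic (exists a, hE m a = e)) as [[a <-] | H].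
  - cbn. rewrite (glue_image (hE f) inj_mE). cbn. rewrite !hcomm.
    rewrite !F3map_comp with (h1 := fun x => inl (hV f x)) (h2 := fun x => inl (hE f x));
      trivial; intro; apply glue_image; assumption.
  - destruct (glue_not_image (hE f) H) as [off Eoff]. cbn. rewrite Eoff. reflexivity.
Defined.

Definition po_inl : F3hom C po_obj.
Proof.
  refine {| hV := inl : cV C -> cV po_obj; hE := inl : cE C -> cE po_obj |}.
  reflexivity.
Defined.

Lemma po_obj_componentwise : componentwise_pushout m f po_inr po_inl.
Proof. split; apply glue_set_pushout; assumption. Qed.

End CoalgPushout.

Lemma is_pushout_componentwise (A B C D : F3coalg) (m : F3hom A B) (f : F3hom A C)
    (n : F3hom B D) (g : F3hom C D) :
  Injective (hV m) -> Injective (hE m) ->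
  @is_pushout F3Coalg A B C D m f n g -> componentwise_pushout m f n g.
Proof.
  intros inj_mV inj_mE po.
  pose proof (po_obj_componentwise f inj_mV inj_mE) as [canV canE].
  destruct (pushout_comparison
              (componentwise_pushout_is_pushout (conj canV canE)) po)
    as (u & v & [U1V U1E] & [U2V U2E] & [V1V V1E] & [V2V V2E] & [VUV VUE]).
  cbn in *.
  split; [exact (set_pushout_retract canV U1V U2V V1V V2V VUV)
         | exact (set_pushout_retract canE U1E U2E V1E V2E VUE)].
Qed.

Lemma M_inj_mono (A B : F3coalg) (m : F3hom A B) : M_inj m -> @is_mono F3Coalg A B m.
Proof.
  intros [inj_V inj_E] X g h [EV EE]; cbn in EV, EE.
  split; intro x; [apply inj_V, EV | apply inj_E, EE].
Qed.

Lemma M_inj_pushout_stable (A B C D : F3coalg) (m : F3hom A B) (f : F3hom A C)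
    (n : F3hom B D) (g : F3hom C D) :
  M_inj m -> @is_pushout F3Coalg A B C D m f n g -> M_inj g.
Proof.
  intros [inj_V inj_E] po.
  destruct (is_pushout_componentwise inj_V inj_E po) as [poV poE].
  exact (conj (spo_inj_g poV) (spo_inj_g poE)).
Qed.

Lemma M_inj_pullback_stable (P B C D : F3coalg) (p1 : F3hom P B) (p2 : F3hom P C)
    (f : F3hom B D) (g : F3hom C D) :
  M_inj g -> @is_pullback F3Coalg P B C D p1 p2 f g -> M_inj p1.
Proof.
  intros [inj_V inj_E] pb.
  destruct (is_pullback_componentwise pb) as [pbV pbE].
  exact (conj (set_pullback_inj pbV inj_V) (set_pullback_inj pbE inj_E)).
Qed.

Lemma F3_vertical_weak_VK : vertical_weak_VK M_inj.
Proof.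
  intros A B C D m f n g [inj_mV inj_mE] po A' B' C' D' m' f' n' g' a b c d
    [topV topE] [inj_aV inj_aE] [inj_bV inj_bE] [inj_cV inj_cE] _ back_m back_f
    [front_nV front_nE] [front_gV front_gE]; cbn in *.
  destruct (is_pushout_componentwise inj_mV inj_mE po) as [poV poE].
  destruct (is_pullback_componentwise back_m) as [back_mV back_mE].
  destruct (is_pullback_componentwise back_f) as [back_fV back_fE].
  pose proof (set_vertical_weak_VK poV inj_bV inj_cV topV back_mV back_fV front_nV front_gV)
    as vkV.
  pose proof (set_vertical_weak_VK poE inj_bE inj_cE topE back_mE back_fE front_nE front_gE)
    as vkE.
  split.
  - intro top_po.
    assert (inj_m'V : Injective (hV m')).
    { intros x y E. apply inj_aV, inj_mV. rewrite !(spb_comm back_mV), E. reflexivity. }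
    assert (inj_m'E : Injective (hE m')).
    { intros x y E. apply inj_aE, inj_mE. rewrite !(spb_comm back_mE), E. reflexivity. }
    destruct (is_pushout_componentwise inj_m'V inj_m'E top_po) as [topV_po topE_po].
    apply vkV in topV_po as [? ?]. apply vkE in topE_po as [? ?].
    split; apply componentwise_pullback_is_pullback; split; assumption.
  - intros [front_n_pb front_g_pb].
    destruct (is_pullback_componentwise front_n_pb), (is_pullback_componentwise front_g_pb).
    apply componentwise_pushout_is_pushout. split; [apply vkV | apply vkE]; split; assumption.
Qed.

Theorem mainTheorem10 : M_adhesive M_inj.
Proof.
  split; [exact M_inj_mono |]. split.
  { intro A. split; intros x y E; exact E. }
  split.
  { intros A B D f g [fV fE] [gV gE]. split; intros x y E; auto. }
  split.
  { intros A B C m f [inj_V inj_E].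
    exists (po_obj m f), (po_inr f inj_V inj_E), (po_inl m f).
    apply componentwise_pushout_is_pushout, po_obj_componentwise. }
  split; [exact M_inj_pushout_stable |]. split.
  { intros B C D f g _. exists (pb_obj f g), (pb_fst f g), (pb_snd f g).
    apply componentwise_pullback_is_pullback, pb_obj_componentwise. }
  split; [exact M_inj_pullback_stable | exact F3_vertical_weak_VK].
Qed.
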